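(* Let $\mathcal S=\{(\alpha_1,\dots,\alpha_6)\in\Sigma:\ \alpha_6=0\}$, regarded as a $5$-dimensional submanifold with coordinates $(\alpha_1,\dots,\alpha_5)$; it is invariant under the action of $I(\mathbb{R}^2_1)$. Provided $I(\mathbb{R}^2_1)$ acts on $\mathcal S$ with three-dimensional orbits, any algebraic $I(\mathbb{R}^2_1)$-invariant $I$ of $\mathcal S$ can be (locally) uniquely expressed as an analytic function $I=F(\mathcal I'_1,\mathcal I'_2)$, where $$\mathcal I'_1=\alpha_4^2-\alpha_5^2,\qquad \mathcal I'_2=2\alpha_3\alpha_4\alpha_5-\alpha_2\alpha_4^2-\alpha_1\alpha_5^2 .$$
   Context: The Minkowski plane $\mathbb{R}^2_1$ has pseudo-Cartesian coordinates $(t,x)$ and metric $dt^2-dx^2$. Every Killing $2$-tensor (symmetric contravariant $2$-tensor $\mathbf K$ with vanishing Schouten bracket $[\mathbf K,\mathbf g]=0$) of $\mathbb{R}^2_1$ has components $K^{tt}=\alpha_1+2\alpha_4x+\alpha_6x^2$, $K^{tx}=K^{xt}=\alpha_3+\alpha_4t+\alpha_5x+\alpha_6tx$, $K^{xx}=\alpha_2+2\alpha_5t+\alpha_6t^2$ for unique constants, identifying the space of such tensors with the parameter space $\Sigma\cong\mathbb{R}^6$. The isometry group $I(\mathbb{R}^2_1)$ (parametrized by $(\phi,a,b)$) acts on $\mathbb{R}^2_1$ by $\tilde t=t\cosh\phi+x\sinh\phi+a$, $\tilde x=t\sinh\phi+x\cosh\phi+b$, and on $\Sigma$ by $\tilde\alpha_1=\alpha_1\cosh^2\phi+2\alpha_3\cosh\phi\sinh\phi+\alpha_2\sinh^2\phi+\alpha_6b^2-2(\alpha_4\cosh\phi+\alpha_5\sinh\phi)b$,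 $\tilde\alpha_2=\alpha_1\sinh^2\phi+2\alpha_3\cosh\phi\sinh\phi+\alpha_2\cosh^2\phi+\alpha_6a^2-2(\alpha_5\cosh\phi+\alpha_4\sinh\phi)a$, $\tilde\alpha_3=\alpha_3(\cosh^2\phi+\sinh^2\phi)+(\alpha_1+\alpha_2)\cosh\phi\sinh\phi-(a\alpha_4+b\alpha_5)\cosh\phi-(a\alpha_5+b\alpha_4)\sinh\phi+\alpha_6ab$, $\tilde\alpha_4=\alpha_4\cosh\phi+\alpha_5\sinh\phi-\alpha_6b$, $\tilde\alpha_5=\alpha_4\sinh\phi+\alpha_5\cosh\phi-\alpha_6a$, $\tilde\alpha_6=\alpha_6$. An $I(\mathbb{R}^2_1)$-invariant of $\mathcal S$ is a smooth function $F$ on (a subset of) $\mathcal S$ with $F(\alpha)=F(\tilde\alpha)$ for all group elements. *)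

From Stdlib Require Import Reals Lra.
From Coquelicot Require Import Coquelicot.
Open Scope R_scope.

Record P6 := mkP6 { al1 : R; al2 : R; al3 : R; al4 : R; al5 : R; al6 : R }.

(* A point of S = {alpha_6 = 0}, with coordinates (alpha_1,...,alpha_5). *)
Record P5 := mkP5 { b1 : R; b2 : R; b3 : R; b4 : R; b5 : R }.

Definition incS (p : P5) : P6 := mkP6 (b1 p) (b2 p) (b3 p) (b4 p) (b5 p) 0.
Definition coordS (q : P6) : P5 := mkP5 (al1 q) (al2 q) (al3 q) (al4 q) (al5 q).

(* The induced action of the isometry (phi,a,b) on Sigma. *)
Definition act (phi a b : R) (q : P6) : P6 :=
  let c := cosh phi in let s := sinh phi in
  let a1 := al1 q in let a2 := al2 q in let a3 := al3 q in
  let a4 := al4 q in let a5 := al5 q in let a6 := al6 q in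
  mkP6
    (a1 * c ^ 2 + 2 * a3 * c * s + a2 * s ^ 2 + a6 * b ^ 2
       - 2 * (a4 * c + a5 * s) * b)
    (a1 * s ^ 2 + 2 * a3 * c * s + a2 * c ^ 2 + a6 * a ^ 2
       - 2 * (a5 * c + a4 * s) * a)
    (a3 * (c ^ 2 + s ^ 2) + (a1 + a2) * c * s - (a * a4 + b * a5) * c
       - (a * a5 + b * a4) * s + a6 * a * b)
    (a4 * c + a5 * s - a6 * b)
    (a4 * s + a5 * c - a6 * a)
    a6.

Definition actS (phi a b : R) (p : P5) : P5 := coordS (act phi a b (incS p)).

Definition P5lin (c1 c2 c3 : R) (u v w : P5) : P5 :=
  mkP5 (c1 * b1 u + c2 * b1 v + c3 * b1 w) (c1 * b2 u + c2 * b2 v + c3 * b2 w)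
       (c1 * b3 u + c2 * b3 v + c3 * b3 w) (c1 * b4 u + c2 * b4 v + c3 * b4 w)
       (c1 * b5 u + c2 * b5 v + c3 * b5 w).
Definition P5zero : P5 := mkP5 0 0 0 0 0.

Definition dcurve (g : R -> P5) : P5 :=
  mkP5 (Derive (fun t => b1 (g t)) 0) (Derive (fun t => b2 (g t)) 0)
       (Derive (fun t => b3 (g t)) 0) (Derive (fun t => b4 (g t)) 0)
       (Derive (fun t => b5 (g t)) 0).

Definition gen_phi (p : P5) : P5 := dcurve (fun t => actS t 0 0 p).
Definition gen_a (p : P5) : P5 := dcurve (fun t => actS 0 t 0 p).
Definition gen_b (p : P5) : P5 := dcurve (fun t => actS 0 0 t p).

(* The orbit through p is three-dimensional: the orbit map
   (phi,a,b) |-> (phi,a,b).p has rank 3 at the identity, i.e. the three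
   infinitesimal generators at p are linearly independent. *)
Definition orbit_dim3 (p : P5) : Prop :=
  forall c1 c2 c3 : R,
    P5lin c1 c2 c3 (gen_phi p) (gen_a p) (gen_b p) = P5zero ->
    c1 = 0 /\ c2 = 0 /\ c3 = 0.

Definition invariantS (I : P5 -> R) : Prop :=
  forall (phi a b : R) (p : P5), I (actS phi a b p) = I p.

Definition is_poly5 (I : P5 -> R) : Prop :=
  exists (d : nat) (c : nat -> nat -> nat -> nat -> nat -> R),
    forall p : P5,
      I p = sum_f_R0 (fun i1 => sum_f_R0 (fun i2 => sum_f_R0 (fun i3 =>
              sum_f_R0 (fun i4 => sum_f_R0 (fun i5 =>
                c i1 i2 i3 i4 i5 * b1 p ^ i1 * b2 p ^ i2 * b3 p ^ i3
                  * b4 p ^ i4 * b5 p ^ i5) d) d) d) d) d.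

(* Open subsets of S ~ R^5 and of R^2 (box topology = Euclidean topology). *)
Definition open5 (U : P5 -> Prop) : Prop :=
  forall p, U p -> exists eps, 0 < eps /\
    forall q, Rabs (b1 q - b1 p) < eps -> Rabs (b2 q - b2 p) < eps ->
      Rabs (b3 q - b3 p) < eps -> Rabs (b4 q - b4 p) < eps ->
      Rabs (b5 q - b5 p) < eps -> U q.
Definition open2 (V : R -> R -> Prop) : Prop :=
  forall x y, V x y -> exists eps, 0 < eps /\
    forall x' y', Rabs (x' - x) < eps -> Rabs (y' - y) < eps -> V x' y'.

Definition analytic2_at (F : R -> R -> R) (x0 y0 : R) : Prop :=
  exists (c : nat -> nat -> R) (r : R), 0 < r /\
    forall x y, Rabs (x - x0) < r -> Rabs (y - y0) < r ->
      (exists M, forall N, sum_f_R0 (fun i => sum_f_R0 (fun j =>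
           Rabs (c i j) * Rabs (x - x0) ^ i * Rabs (y - y0) ^ j) N) N <= M) /\
      Un_cv (fun N => sum_f_R0 (fun i => sum_f_R0 (fun j =>
           c i j * (x - x0) ^ i * (y - y0) ^ j) N) N) (F x y).

Definition analytic2_on (F : R -> R -> R) (V : R -> R -> Prop) : Prop :=
  forall x y, V x y -> analytic2_at F x y.

Definition Inv1 (p : P5) : R := b4 p ^ 2 - b5 p ^ 2.
Definition Inv2 (p : P5) : R :=
  2 * b3 p * b4 p * b5 p - b2 p * b4 p ^ 2 - b1 p * b5 p ^ 2.

From Stdlib Require Import Reals Lra Lia List.
From Coquelicot Require Import Coquelicot.
Import ListNotations.
Open Scope R_scope.

(* The coefficients (alpha_4, alpha_5) transform under the boost alone, as a
   Lorentz vector, so the orbits are three-dimensional exactly where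
   (alpha_4, alpha_5) <> 0.  There one light-cone coordinate
   alpha_4 + sg alpha_5 (sg = 1 or -1) is nonzero, and the boost rescales it
   by exp (sg phi); once it is normalised to a constant k, the translations
   (a, b) act transitively on (alpha_1, alpha_2, alpha_3) within each level set
   of I'_2.  Hence every point of U = {k (alpha_4 + sg alpha_5) > 0} is moved
   by the group onto the point of a cross-section that depends affinely on
   (I'_1, I'_2), so on U an invariant I equals I (cross_section (I'_1, I'_2)),
   a polynomial, hence analytic, function of the two invariants; it is unique
   because (I'_1, I'_2) maps U onto R^2. *)

Definition monomials := list (R * nat * nat).

Fixpoint eval_monomials (l : monomials) (X Y : R) : R :=
  match l with
  | [] => 0
  | (c, i, j) :: t => c * X ^ i * Y ^ j + eval_monomials t X Y
  end.

(* Asking for an expansion around every centre makes the closure properties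
   below immediate, with no binomial re-expansion. *)
Definition poly2 (F : R -> R -> R) : Prop :=
  forall x0 y0, exists l, forall x y, F x y = eval_monomials l (x - x0) (y - y0).

Lemma eval_monomials_app l1 l2 X Y :
  eval_monomials (l1 ++ l2) X Y = eval_monomials l1 X Y + eval_monomials l2 X Y.
Proof. induction l1 as [|[[c i] j] t IH]; simpl; [ring | rewrite IH; ring]. Qed.

Definition scale_monomials (c : R) (i j : nat) (l : monomials) : monomials :=
  map (fun '((c', i', j') : R * nat * nat) => (c * c', (i + i')%nat, (j + j')%nat)) l.

Definition mul_monomials (l1 l2 : monomials) : monomials :=
  flat_map (fun '((c, i, j) : R * nat * nat) => scale_monomials c i j l2) l1.

Lemma eval_scale_monomials c i j l X Y :
  eval_monomials (scale_monomials c i j l) X Y = c * X ^ i * Y ^ j * eval_monomials l X Y.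
Proof.
  induction l as [|[[c' i'] j'] t IH]; simpl; [ring|].
  rewrite IH, !pow_add. ring.
Qed.

Lemma eval_mul_monomials l1 l2 X Y :
  eval_monomials (mul_monomials l1 l2) X Y = eval_monomials l1 X Y * eval_monomials l2 X Y.
Proof.
  induction l1 as [|[[c i] j] t IH]; simpl; [ring|].
  rewrite eval_monomials_app, IH, eval_scale_monomials. ring.
Qed.

Lemma poly2_ext F G : (forall x y, F x y = G x y) -> poly2 F -> poly2 G.
Proof.
  intros H HF x0 y0. destruct (HF x0 y0) as [l Hl].
  exists l. intros x y. rewrite <- H. apply Hl.
Qed.

Lemma poly2_const c : poly2 (fun _ _ => c).
Proof. intros x0 y0. exists [(c, 0%nat, 0%nat)]. intros x y. simpl. ring. Qed.

Lemma poly2_fst : poly2 (fun x _ => x).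
Proof. intros x0 y0. exists [(x0, 0%nat, 0%nat); (1, 1%nat, 0%nat)]. intros x y. simpl. ring. Qed.

Lemma poly2_snd : poly2 (fun _ y => y).
Proof. intros x0 y0. exists [(y0, 0%nat, 0%nat); (1, 0%nat, 1%nat)]. intros x y. simpl. ring. Qed.

Lemma poly2_add F G : poly2 F -> poly2 G -> poly2 (fun x y => F x y + G x y).
Proof.
  intros HF HG x0 y0. destruct (HF x0 y0) as [l1 H1], (HG x0 y0) as [l2 H2].
  exists (l1 ++ l2). intros x y. rewrite eval_monomials_app, H1, H2. reflexivity.
Qed.

Lemma poly2_mul F G : poly2 F -> poly2 G -> poly2 (fun x y => F x y * G x y).
Proof.
  intros HF HG x0 y0. destruct (HF x0 y0) as [l1 H1], (HG x0 y0) as [l2 H2].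
  exists (mul_monomials l1 l2). intros x y. rewrite eval_mul_monomials, H1, H2. reflexivity.
Qed.

Lemma poly2_pow F n : poly2 F -> poly2 (fun x y => F x y ^ n).
Proof.
  intros HF. induction n as [|n IH]; simpl.
  - apply poly2_const.
  - now apply poly2_mul.
Qed.

Lemma poly2_sum (F : nat -> R -> R -> R) n :
  (forall i, poly2 (F i)) -> poly2 (fun x y => sum_f_R0 (fun i => F i x y) n).
Proof.
  intros HF. induction n as [|n IH]; simpl; [apply HF | now apply poly2_add].
Qed.

Lemma poly2_affine u v w : poly2 (fun x y => u + v * x + w * y).
Proof.
  apply poly2_add; [apply poly2_add|]; [apply poly2_const | ..];
    apply poly2_mul; auto using poly2_const, poly2_fst, poly2_snd.
Qed.

Lemma poly2_comp_poly5 (I : P5 -> R) (g : R -> R -> P5) : is_poly5 I ->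
  poly2 (fun x y => b1 (g x y)) -> poly2 (fun x y => b2 (g x y)) ->
  poly2 (fun x y => b3 (g x y)) -> poly2 (fun x y => b4 (g x y)) ->
  poly2 (fun x y => b5 (g x y)) -> poly2 (fun x y => I (g x y)).
Proof.
  intros [d [c Hc]] H1 H2 H3 H4 H5.
  apply (poly2_ext (fun x y => sum_f_R0 (fun i1 => sum_f_R0 (fun i2 => sum_f_R0 (fun i3 =>
              sum_f_R0 (fun i4 => sum_f_R0 (fun i5 =>
                c i1 i2 i3 i4 i5 * b1 (g x y) ^ i1 * b2 (g x y) ^ i2 * b3 (g x y) ^ i3
                  * b4 (g x y) ^ i4 * b5 (g x y) ^ i5) d) d) d) d) d)).
  { intros x y. symmetry. apply Hc. }
  repeat (apply poly2_sum; intro).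
  repeat apply poly2_mul; auto using poly2_const, poly2_pow.
Qed.

Fixpoint coef (l : monomials) (i j : nat) : R :=
  match l with
  | [] => 0
  | (c, i', j') :: t => (if (Nat.eqb i i' && Nat.eqb j j')%bool then c else 0) + coef t i j
  end.

Definition truncate (N : nat) (l : monomials) : monomials :=
  filter (fun '((_, i, j) : R * nat * nat) => (Nat.leb i N && Nat.leb j N)%bool) l.

Fixpoint abs_monomials (l : monomials) : monomials :=
  match l with
  | [] => []
  | (c, i, j) :: t => (Rabs c, i, j) :: abs_monomials t
  end.

Lemma sum_f_R0_indicator (f : nat -> R) i0 N :
  sum_f_R0 (fun i => if Nat.eqb i i0 then f i else 0) N = if Nat.leb i0 N then f i0 else 0.
Proof.
  induction N as [|N IH]; cbn [sum_f_R0].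
  - destruct i0; reflexivity.
  - rewrite IH. destruct (Nat.eqb_spec (S N) i0) as [<-|ne].
    + rewrite Nat.leb_refl. replace (Nat.leb (S N) N) with false
        by (symmetry; apply Nat.leb_gt; lia). ring.
    + destruct (Nat.leb_spec i0 N), (Nat.leb_spec i0 (S N)); try lia; ring.
Qed.

Lemma sum_f_R0_indicator2 (g : nat -> nat -> R) i0 j0 N :
  sum_f_R0 (fun i => sum_f_R0 (fun j =>
    if (Nat.eqb i i0 && Nat.eqb j j0)%bool then g i j else 0) N) N =
  if (Nat.leb i0 N && Nat.leb j0 N)%bool then g i0 j0 else 0.
Proof.
  transitivity (sum_f_R0 (fun i =>
    if Nat.eqb i i0 then (if Nat.leb j0 N then g i j0 else 0) else 0) N).
  - apply sum_eq. intros i _. destruct (Nat.eqb i i0); simpl.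
    + apply sum_f_R0_indicator.
    + apply sum_eq_R0. reflexivity.
  - rewrite sum_f_R0_indicator. destruct (Nat.leb i0 N), (Nat.leb j0 N); reflexivity.
Qed.

Lemma sum_coef l N X Y :
  sum_f_R0 (fun i => sum_f_R0 (fun j => coef l i j * X ^ i * Y ^ j) N) N =
  eval_monomials (truncate N l) X Y.
Proof.
  induction l as [|[[c i0] j0] t IH].
  - apply sum_eq_R0. intros i _. apply sum_eq_R0. intros j _. simpl. ring.
  - cbn [coef].
    transitivity (sum_f_R0 (fun i => sum_f_R0 (fun j =>
        if (Nat.eqb i i0 && Nat.eqb j j0)%bool then c * X ^ i * Y ^ j else 0) N) N
      + eval_monomials (truncate N t) X Y).
    + rewrite <- IH, <- sum_plus. apply sum_eq. intros i _.
      rewrite <- sum_plus. apply sum_eq. intros j _.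
      destruct (_ && _)%bool; ring.
    + rewrite sum_f_R0_indicator2. unfold truncate; cbn [filter].
      destruct (_ && _)%bool; simpl; ring.
Qed.

Lemma truncate_eventually_id l : exists B, forall N, (B <= N)%nat -> truncate N l = l.
Proof.
  induction l as [|[[c i] j] t [B HB]].
  - exists 0%nat. reflexivity.
  - exists (Nat.max B (Nat.max i j)). intros N HN. unfold truncate in *; simpl.
    rewrite HB by lia.
    replace (Nat.leb i N) with true by (symmetry; apply Nat.leb_le; lia).
    replace (Nat.leb j N) with true by (symmetry; apply Nat.leb_le; lia).
    reflexivity.
Qed.

Lemma coef_abs_le l i j : Rabs (coef l i j) <= coef (abs_monomials l) i j.
Proof.
  induction l as [|[[c i0] j0] t IH]; simpl.
  - rewrite Rabs_R0. lra.
  - eapply Rle_trans; [apply Rabs_triang|].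
    destruct (_ && _)%bool; rewrite ?Rabs_R0; lra.
Qed.

Lemma eval_truncate_abs_le l N X Y : 0 <= X -> 0 <= Y ->
  eval_monomials (truncate N (abs_monomials l)) X Y <= eval_monomials (abs_monomials l) X Y.
Proof.
  intros HX HY. unfold truncate.
  induction l as [|[[c i] j] t IH]; simpl; [lra|].
  assert (0 <= Rabs c * X ^ i * Y ^ j).
  { apply Rmult_le_pos; [apply Rmult_le_pos|]; auto using Rabs_pos, pow_le. }
  destruct (_ && _)%bool; simpl; lra.
Qed.

Lemma poly2_analytic F : poly2 F -> forall x0 y0, analytic2_at F x0 y0.
Proof.
  intros HF x0 y0. destruct (HF x0 y0) as [l Hl].
  exists (coef l), 1. split; [lra|]. intros x y _ _. split.
  - exists (eval_monomials (abs_monomials l) (Rabs (x - x0)) (Rabs (y - y0))). intros N.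
    eapply Rle_trans; [|apply eval_truncate_abs_le; apply Rabs_pos].
    rewrite <- sum_coef. apply sum_Rle. intros i _. apply sum_Rle. intros j _.
    apply Rmult_le_compat_r; [apply pow_le, Rabs_pos|].
    apply Rmult_le_compat_r; [apply pow_le, Rabs_pos|].
    apply coef_abs_le.
  - intros eps Heps. destruct (truncate_eventually_id l) as [B HB].
    exists B. intros N HN. rewrite sum_coef, HB, <- Hl by lia.
    unfold R_dist. rewrite Rminus_diag, Rabs_R0. exact Heps.
Qed.

Lemma cosh2_sub_sinh2 phi : cosh phi ^ 2 - sinh phi ^ 2 = 1.
Proof.
  unfold cosh, sinh. rewrite exp_Ropp.
  pose proof (exp_pos phi). field. lra.
Qed.

Lemma Inv1_actS phi a b q : Inv1 (actS phi a b q) = Inv1 q.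
Proof.
  transitivity (Inv1 q * (cosh phi ^ 2 - sinh phi ^ 2)).
  - destruct q; unfold Inv1, actS, act, coordS, incS; simpl. ring.
  - rewrite cosh2_sub_sinh2. ring.
Qed.

Lemma Inv2_actS phi a b q : Inv2 (actS phi a b q) = Inv2 q.
Proof.
  transitivity (Inv2 q * (cosh phi ^ 2 - sinh phi ^ 2) ^ 2).
  - destruct q; unfold Inv2, actS, act, coordS, incS; simpl. ring.
  - rewrite cosh2_sub_sinh2. ring.
Qed.

Lemma actS_boost_then_translate phi a b q :
  actS 0 a b (actS phi 0 0 q) = actS phi a b q.
Proof.
  destruct q; unfold actS, act, coordS, incS; simpl.
  rewrite cosh_0, sinh_0. f_equal; ring.
Qed.

Ltac compute_generator :=
  intros [q1 q2 q3 q4 q5];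
  unfold gen_phi, gen_a, gen_b, dcurve, actS, act, coordS, incS; simpl;
  f_equal; apply is_derive_unique; unfold cosh, sinh; auto_derive; auto;
  rewrite ?Ropp_0, ?exp_0; field.

Lemma gen_phi_val q : gen_phi q = mkP5 (2 * b3 q) (2 * b3 q) (b1 q + b2 q) (b5 q) (b4 q).
Proof. revert q; compute_generator. Qed.

Lemma gen_a_val q : gen_a q = mkP5 0 (-2 * b5 q) (- b4 q) 0 0.
Proof. revert q; compute_generator. Qed.

Lemma gen_b_val q : gen_b q = mkP5 (-2 * b4 q) 0 (- b5 q) 0 0.
Proof. revert q; compute_generator. Qed.

Lemma orbit_dim3_iff q : orbit_dim3 q <-> b4 q <> 0 \/ b5 q <> 0.
Proof.
  unfold orbit_dim3, P5lin, P5zero. rewrite gen_phi_val, gen_a_val, gen_b_val; simpl.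
  split.
  - intros Hfree.
    destruct (Req_dec (b4 q) 0) as [h4|h4]; [|now left].
    destruct (Req_dec (b5 q) 0) as [h5|h5]; [|now right].
    destruct (Hfree 0 1 0) as (_ & H & _); [rewrite h4, h5; f_equal; ring | lra].
  - intros Hnz c1 c2 c3 E. injection E as e1 e2 e3 e4 e5.
    destruct Hnz as [h4|h5].
    + assert (c1 = 0) by nra. subst c1.
      assert (c3 = 0) by nra. subst c3.
      assert (c2 = 0) by nra. auto.
    + assert (c1 = 0) by nra. subst c1.
      assert (c2 = 0) by nra. subst c2.
      assert (c3 = 0) by nra. auto.
Qed.

Definition null_coord (sg : R) (q : P5) : R := b4 q + sg * b5 q.

Definition chart (sg k : R) (q : P5) : Prop := 0 < k * null_coord sg q.

Lemma null_coord_nonzero sg q : null_coord sg q <> 0 -> b4 q <> 0 \/ b5 q <> 0.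
Proof.
  unfold null_coord. intros Hm.
  destruct (Req_dec (b4 q) 0) as [h4|h4]; [right | now left].
  intros h5. apply Hm. rewrite h4, h5. ring.
Qed.

Lemma null_coord_sign_choice p : b4 p <> 0 \/ b5 p <> 0 ->
  exists sg, (sg = 1 \/ sg = -1) /\ null_coord sg p <> 0.
Proof.
  intros Hnz.
  destruct (Req_dec (null_coord 1 p) 0) as [h|h]; [exists (-1) | exists 1]; split; auto.
  unfold null_coord in *. intros h'. destruct Hnz; lra.
Qed.

Lemma null_coord_actS sg phi a b q : (sg = 1 \/ sg = -1) ->
  null_coord sg (actS phi a b q) = exp (sg * phi) * null_coord sg q.
Proof.
  intros Hsg. destruct q; unfold null_coord, actS, act, coordS, incS; simpl.
  unfold cosh, sinh.
  pose proof (exp_pos phi).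
  destruct Hsg; subst sg;
    [replace (1 * phi) with phi by ring | replace (-1 * phi) with (- phi) by ring];
    rewrite exp_Ropp; field; lra.
Qed.

Lemma boost_null_coord sg k q : (sg = 1 \/ sg = -1) -> chart sg k q ->
  exists phi, null_coord sg (actS phi 0 0 q) = k.
Proof.
  unfold chart. intros Hsg Hpos.
  assert (Hm : null_coord sg q <> 0) by (intro h; rewrite h, Rmult_0_r in Hpos; lra).
  assert (Hratio : 0 < k / null_coord sg q).
  { replace (k / null_coord sg q) with (k * null_coord sg q / (null_coord sg q) ^ 2)
      by (field; exact Hm).
    apply Rdiv_lt_0_compat; [exact Hpos | apply pow2_gt_0; exact Hm]. }
  exists (sg * ln (k / null_coord sg q)).
  rewrite null_coord_actS by exact Hsg.
  replace (sg * (sg * ln (k / null_coord sg q))) with (ln (k / null_coord sg q))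
    by (destruct Hsg; subst sg; ring).
  rewrite exp_ln by exact Hratio. field. exact Hm.
Qed.

Lemma translation_transitive B T :
  b4 T = b4 B -> b5 T = b5 B -> Inv2 T = Inv2 B -> b4 B <> 0 \/ b5 B <> 0 ->
  exists a b, actS 0 a b B = T.
Proof.
  destruct B as [B1 B2 B3 B4 B5], T as [T1 T2 T3 T4 T5]; simpl.
  intros -> -> HInv2 Hnz.
  set (n := B4 ^ 2 + B5 ^ 2).
  assert (Hn : n <> 0) by (unfold n; destruct Hnz; nra).
  set (d1 := T1 - B1); set (d2 := T2 - B2); set (d3 := T3 - B3).
  set (e := 2 * d3 * B4 * B5 - d2 * B4 ^ 2 - d1 * B5 ^ 2).
  assert (He : e = 0) by (unfold Inv2 in HInv2; simpl in HInv2; unfold e, d1, d2, d3; lra).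
  (* the three translation equations for (a, b) are consistent exactly when e = 0 *)
  exists ((B5 * (d1 - d2) / 2 - B4 * d3) / n), ((B4 * (d2 - d1) / 2 - B5 * d3) / n).
  unfold actS, act, coordS, incS; simpl. rewrite cosh_0, sinh_0.
  f_equal; apply Rminus_diag_uniq.
  1-2: transitivity (e / n); [unfold e, d1, d2, d3, n in *; field; exact Hn|];
    rewrite He; unfold Rdiv; ring.
  - unfold d1, d2, d3, n in *. field. exact Hn.
  - ring.
  - ring.
Qed.

Lemma null_coord_Inv1_inj sg q q' : (sg = 1 \/ sg = -1) ->
  null_coord sg q' = null_coord sg q -> null_coord sg q <> 0 -> Inv1 q' = Inv1 q ->
  b4 q' = b4 q /\ b5 q' = b5 q.
Proof.
  unfold null_coord, Inv1. intros Hsg Hm Hm0 HInv1.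
  (* the product of the two null coordinates is Inv1 *)
  assert (Hdual : b4 q' - sg * b5 q' = b4 q - sg * b5 q).
  { apply (Rmult_eq_reg_l (b4 q + sg * b5 q)); [|exact Hm0].
    rewrite <- Hm at 1.
    destruct Hsg; subst sg; lra. }
  destruct Hsg; subst sg; split; lra.
Qed.

(* [b4 + sg b5 = k] and [b4 - sg b5 = x / k] give [Inv1 = x]; then
   [Inv2 = y (b4 + sg b5)^2 / k^2 = y]. *)
Definition cross_section (sg k x y : R) : P5 :=
  mkP5 (- y / k ^ 2) (- y / k ^ 2) (sg * y / k ^ 2) ((k + x / k) / 2) (sg * ((k - x / k) / 2)).

Section CrossSection.

Variables (sg k x y : R).
Hypotheses (Hsg : sg = 1 \/ sg = -1) (Hk : k <> 0).

Lemma Inv1_cross_section : Inv1 (cross_section sg k x y) = x.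
Proof. unfold cross_section, Inv1; simpl. destruct Hsg; subst sg; field; exact Hk. Qed.

Lemma Inv2_cross_section : Inv2 (cross_section sg k x y) = y.
Proof. unfold cross_section, Inv2; simpl. destruct Hsg; subst sg; field; exact Hk. Qed.

Lemma null_coord_cross_section : null_coord sg (cross_section sg k x y) = k.
Proof. unfold cross_section, null_coord; simpl. destruct Hsg; subst sg; field; exact Hk. Qed.

End CrossSection.

Lemma reach_cross_section sg k q : (sg = 1 \/ sg = -1) -> chart sg k q ->
  exists phi a b, actS phi a b q = cross_section sg k (Inv1 q) (Inv2 q).
Proof.
  intros Hsg Hpos.
  assert (Hk : k <> 0) by (intro h; unfold chart in Hpos; rewrite h, Rmult_0_l in Hpos; lra).
  destruct (boost_null_coord sg k q Hsg Hpos) as [phi Hphi].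
  set (B := actS phi 0 0 q) in Hphi.
  set (T := cross_section sg k (Inv1 q) (Inv2 q)).
  assert (HT1 : Inv1 T = Inv1 q) by (apply Inv1_cross_section; assumption).
  assert (HT2 : Inv2 T = Inv2 q) by (apply Inv2_cross_section; assumption).
  assert (HTk : null_coord sg T = k) by (apply null_coord_cross_section; assumption).
  assert (HB1 : Inv1 B = Inv1 q) by apply Inv1_actS.
  assert (HB2 : Inv2 B = Inv2 q) by apply Inv2_actS.
  destruct (null_coord_Inv1_inj sg B T Hsg) as [H4 H5];
    [congruence | congruence | congruence |].
  destruct (translation_transitive B T H4 H5) as (a & b & Hab);
    [congruence | apply (null_coord_nonzero sg); congruence |].
  exists phi, a, b. rewrite <- actS_boost_then_translate. exact Hab.
Qed.

Lemma mul_lower_bound u d eps : Rabs d < eps -> - (Rabs u * eps) <= u * d.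
Proof.
  intros h. pose proof (Rabs_pos u). pose proof (Rabs_maj2 (u * d)).
  assert (Rabs (u * d) <= Rabs u * eps) by (rewrite Rabs_mult; apply Rmult_le_compat_l; lra).
  lra.
Qed.

Lemma open5_chart sg k : open5 (chart sg k).
Proof.
  intros p Hp. unfold chart, null_coord in *.
  set (L := Rabs k + Rabs (k * sg) + 1).
  assert (HL : 0 < L) by (unfold L; pose proof (Rabs_pos k); pose proof (Rabs_pos (k * sg)); lra).
  set (eps := k * (b4 p + sg * b5 p) / L).
  assert (Heps : eps * L = k * (b4 p + sg * b5 p)) by (unfold eps; field; lra).
  assert (Hpos : 0 < eps) by (now apply Rdiv_lt_0_compat).
  exists eps. split; [exact Hpos|].
  intros q _ _ _ h4 h5.
  pose proof (mul_lower_bound k _ _ h4). pose proof (mul_lower_bound (k * sg) _ _ h5).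
  unfold L in Heps. lra.
Qed.

Lemma chart_orbit_dim3 sg k q : chart sg k q -> orbit_dim3 q.
Proof.
  intros Hq. apply orbit_dim3_iff, (null_coord_nonzero sg).
  intros h. unfold chart in Hq. rewrite h, Rmult_0_r in Hq. lra.
Qed.

Lemma chart_cross_section sg k x y : (sg = 1 \/ sg = -1) -> k <> 0 ->
  chart sg k (cross_section sg k x y).
Proof.
  intros Hsg Hk. unfold chart.
  rewrite null_coord_cross_section by assumption.
  exact (Rsqr_pos_lt k Hk).
Qed.

Lemma invariant_on_chart (I : P5 -> R) sg k q : invariantS I -> (sg = 1 \/ sg = -1) ->
  chart sg k q -> I q = I (cross_section sg k (Inv1 q) (Inv2 q)).
Proof.
  intros Hinv Hsg Hq.
  destruct (reach_cross_section sg k q Hsg Hq) as (phi & a & b & <-).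
  symmetry. apply Hinv.
Qed.

Lemma poly2_I_cross_section (I : P5 -> R) sg k : is_poly5 I -> k <> 0 ->
  poly2 (fun x y => I (cross_section sg k x y)).
Proof.
  intros HI Hk. apply poly2_comp_poly5; [exact HI | ..]; unfold cross_section; simpl.
  - apply (poly2_ext (fun x y => 0 + 0 * x + (-1 / k ^ 2) * y)); [|apply poly2_affine].
    intros; field; exact Hk.
  - apply (poly2_ext (fun x y => 0 + 0 * x + (-1 / k ^ 2) * y)); [|apply poly2_affine].
    intros; field; exact Hk.
  - apply (poly2_ext (fun x y => 0 + 0 * x + (sg / k ^ 2) * y)); [|apply poly2_affine].
    intros; field; exact Hk.
  - apply (poly2_ext (fun x y => k / 2 + (1 / (2 * k)) * x + 0 * y)); [|apply poly2_affine].
    intros; field; exact Hk.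
  - apply (poly2_ext (fun x y => sg * k / 2 + (- sg / (2 * k)) * x + 0 * y));
      [|apply poly2_affine].
    intros; field; exact Hk.
Qed.

Theorem lemma4p1 (I : P5 -> R) :
  is_poly5 I -> invariantS I ->
  forall p : P5, orbit_dim3 p ->
  exists (U : P5 -> Prop) (V : R -> R -> Prop) (F : R -> R -> R),
    open5 U /\ U p /\ (forall q, U q -> orbit_dim3 q) /\
    open2 V /\ V (Inv1 p) (Inv2 p) /\
    (forall x y, V x y -> exists q, U q /\ Inv1 q = x /\ Inv2 q = y) /\
    analytic2_on F V /\
    (forall q, U q -> I q = F (Inv1 q) (Inv2 q)) /\
    (forall G : R -> R -> R,
       (forall q, U q -> I q = G (Inv1 q) (Inv2 q)) ->
       forall x y, V x y -> G x y = F x y).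
Proof.
  intros Hpoly Hinv p Hp. apply orbit_dim3_iff in Hp.
  destruct (null_coord_sign_choice p Hp) as (sg & Hsg & Hk).
  set (k := null_coord sg p) in Hk.
  exists (chart sg k), (fun _ _ => True), (fun x y => I (cross_section sg k x y)).
  split; [apply open5_chart|].
  split; [exact (Rsqr_pos_lt k Hk)|].
  split; [apply chart_orbit_dim3|].
  split; [intros x y _; exists 1; split; [lra | trivial]|].
  split; [trivial|].
  split.
  { intros x y _. exists (cross_section sg k x y).
    split; [now apply chart_cross_section|].
    split; [apply Inv1_cross_section | apply Inv2_cross_section]; assumption. }
  split; [intros x y _; apply poly2_analytic, poly2_I_cross_section; assumption|].
  split; [intros q; now apply invariant_on_chart|].
  intros G HG x y _.
  rewrite HG by now apply chart_cross_section.
  rewrite Inv1_cross_section, Inv2_cross_section by assumption. reflexivity.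
Qed.
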